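(* Let $L$, $\rho$, $\mathcal{H}$ and $\mathrm{ht}_\rho$ be as in the context. The open horoball $\{x\in\mathbb{C}H^{13}:\mathrm{ht}_\rho(x)<1\}$ is disjoint from $\mathcal{H}$, and the hyperplanes of $\mathcal{M}$ that meet its boundary $\{x:\mathrm{ht}_\rho(x)=1\}$ are exactly the orthogonal complements $l^\perp$ of the roots $l$ satisfying $|\langle\rho,l\rangle|^2=3$.
   Context: Let $\omega$ be a primitive cube root of unity, $\mathcal{E}=\mathbb{Z}[\omega]$, $\theta=\omega-\bar\omega=\sqrt{-3}$. Hermitian forms are linear in the first argument and antilinear in the second; $v^2=\langle v,v\rangle$. $\Lambda$ is the complex Leech lattice, an $\mathcal{E}$-lattice of rank 12 whose underlying real lattice is a scaled Leech lattice, scaled to have minimal norm $6$ (all inner products in $\theta\mathcal{E}$, $\Lambda=\theta\Lambda^*$). $L=\Lambda\oplus\mathcal{E}^2$, vectors $(x;y,z)$, with $\langle(x;y,z),(x';y',z')\rangle=\langle x,x'\rangle_\Lambda+\bar\theta y\bar z'+\theta z\bar y'$; signature $(13,1)$. $\mathbb{C}H^{13}$ is the set of negative-definite lines in $L\otimes_{\mathcal{E}}\mathbb{C}$. A root is a vector of $L$ of norm $3$; $\mathcal{M}$ is the set of hyperplanes $s^\perp\subseteq\mathbb{C}H^{13}$ for roots $s$, $\mathcal{H}$ their union. $\rho=(0;0,1)$, and for $x\in\mathbb{C}H^{13}$ represented by $w$, $\mathrm{ht}_\rho(x)=-|\langle\rho,w\rangle|^2/w^2$. *)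

From mathcomp Require Import all_boot all_order all_algebra.
From mathcomp Require Import complex Rstruct.
Set Implicit Arguments. Unset Strict Implicit. Unset Printing Implicit Defensive.
Import Order.TTheory GRing.Theory Num.Theory.
Local Open Scope ring_scope.

Notation C := (Rdefinitions.R[i]).

Definition omega : C := (-1 + sqrtC (-3)) / 2.
Definition theta : C := omega - omega^*.

Definition inE (z : C) : Prop := exists a b : int, z = a%:~R + b%:~R * omega.

(* The E-lattice Lambda of rank 12 is modelled as E^12 (coordinates w.r.t. an
   E-basis) inside Lambda (x)_E C = C^12, with Hermitian form given by the Gram
   matrix G: <u,v> = sum_ij u_i G_ij conj(v_j)  (linear in u, antilinear in v). *)
Definition formG (G : 'M[C]_12) (u v : 'rV[C]_12) : C :=
  \sum_(i < 12) \sum_(j < 12) u 0 i * G i j * (v 0 j)^*.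

Definition inLam (v : 'rV[C]_12) : Prop := forall i, inE (v 0 i).

Definition inDual (G : 'M[C]_12) (v : 'rV[C]_12) : Prop :=
  forall u, inLam u -> inE (formG G v u).

Definition complex_Leech (G : 'M[C]_12) : Prop :=
  [/\ forall i j, G j i = (G i j)^*,
      forall u : 'rV[C]_12, u != 0 -> 0 < formG G u u,
      forall u v, inLam u -> inLam v -> exists e, inE e /\ formG G u v = theta * e,
      forall v, inLam v <-> exists u, inDual G u /\ v = theta *: u
    & (forall v, inLam v -> v != 0 -> 6 <= formG G v v) /\
      (exists v, inLam v /\ formG G v v = 6)].

(* L = Lambda (+) E^2, vectors (x; y, z); L (x)_E C = C^12 x C x C. *)
Definition Lvec : Type := ('rV[C]_12 * C * C)%type.

Definition formL (G : 'M[C]_12) (a b : Lvec) : C :=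
  formG G a.1.1 b.1.1 + theta^* * a.1.2 * (b.2)^* + theta * a.2 * (b.1.2)^*.

Definition inL (a : Lvec) : Prop := [/\ inLam a.1.1, inE a.1.2 & inE a.2].

Definition is_root (G : 'M[C]_12) (s : Lvec) : Prop := inL s /\ formL G s s = 3.

Definition rho : Lvec := (0, 0, 1).

(* w represents a point of CH^13 (a negative-definite line) *)
Definition inCH (G : 'M[C]_12) (w : Lvec) : Prop := formL G w w < 0.

Definition ht (G : 'M[C]_12) (w : Lvec) : C :=
  - (`|formL G rho w| ^+ 2) / formL G w w.

Definition on_mirror (G : 'M[C]_12) (s w : Lvec) : Prop :=
  inCH G w /\ formL G w s = 0.

From Pilot Require Import Defs.
From mathcomp Require Import all_boot all_order all_algebra.
From mathcomp Require Import complex Rstruct ring zify.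
Set Implicit Arguments. Unset Strict Implicit. Unset Printing Implicit Defensive.
Import Order.TTheory GRing.Theory Num.Theory.
Local Open Scope ring_scope.

(* Let w be orthogonal to a root s and put v := <rho,s>^* w - <rho,w>^* s.
   Then <rho,v> = 0, so the E^2-part of v has zero y-coordinate and
   <v,v> is the (nonnegative) Leech norm of its Lambda-part.  Expanding,
   <v,v> = |<rho,s>|^2 <w,w> + 3 |<rho,w>|^2, whence
   ht_rho(w) >= |<rho,s>|^2 / 3.  A root has nonzero y-coordinate (its
   Lambda-part would otherwise have norm 3 < 6), so |<rho,s>|^2 = 3 N(y) >= 3
   and ht_rho >= 1 on every mirror, with equality only when |<rho,s>|^2 = 3.
   Conversely, if |<rho,l>|^2 = 3 then rho - <rho,l>/3 l lies on l^perp and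
   has height exactly 1. *)

Lemma conjC_sqrtCN3 : (sqrtC (-3 : C))^* = - sqrtC (-3).
Proof.
set s := sqrtC (-3 : C).
have s2 : s ^+ 2 = -3 by rewrite sqrtCK.
have sJ2 : s^* ^+ 2 = -3 by rewrite -rmorphXn s2 rmorphN rmorph_nat.
have : (s^* - s) * (s^* + s) == 0.
  by rewrite -subr_sqr sJ2 s2 subrr.
rewrite mulf_eq0 => /orP [|]; last by rewrite addr_eq0 => /eqP.
(* s^* = s would make s real, with s^2 = -3 < 0 *)
rewrite subr_eq0 => /eqP /CrealP; rewrite realEsqr s2 oppr_ge0 => s_ge0.
by have := lt_le_trans (ltr0n C 3) s_ge0; rewrite ltxx.
Qed.

Lemma conj_omega : omega^* = (-1 - sqrtC (-3)) / 2.
Proof.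
by rewrite /omega rmorphM rmorphD rmorphN /= conjC_sqrtCN3 fmorphV rmorph_nat rmorph1.
Qed.

Lemma theta_sqrtCN3 : theta = sqrtC (-3).
Proof. by rewrite /theta conj_omega /omega; field. Qed.

Lemma conj_theta : theta^* = - theta.
Proof. by rewrite theta_sqrtCN3 conjC_sqrtCN3. Qed.

Lemma theta_mulJ : theta * theta^* = 3.
Proof. by rewrite conj_theta mulrN -expr2 theta_sqrtCN3 sqrtCK opprK. Qed.

Lemma omegaDJ : omega + omega^* = -1.
Proof. by rewrite conj_omega /omega; field. Qed.

Lemma omegaMJ : omega * omega^* = 1.
Proof.
rewrite conj_omega /omega.
have -> : (-1 + sqrtC (-3)) / 2 * ((-1 - sqrtC (-3)) / 2) =
          (1 - sqrtC (-3 : C) ^+ 2) / 4 by field.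
by rewrite sqrtCK; field.
Qed.

Lemma eisenstein_normC_ge1 (a : C) : Defs.inE a -> a != 0 -> 1 <= a * a^*.
Proof.
case=> [m [n ->]] a_neq0.
have -> : (m%:~R + n%:~R * omega) * (m%:~R + n%:~R * omega)^* =
          (m ^+ 2 - m * n + n ^+ 2)%:~R :> C.
  rewrite rmorphD rmorphM !rmorph_int.
  have -> : (m%:~R + n%:~R * omega) * (m%:~R + n%:~R * omega^*) =
      m%:~R ^+ 2 + m%:~R * n%:~R * (omega + omega^*)
      + n%:~R ^+ 2 * (omega * omega^*) :> C by ring.
  by rewrite omegaDJ omegaMJ intrD intrB intrM !rmorphXn /=; ring.
rewrite -[1 : C]/(1%:~R) ler_int !expr2.
have [m0 | /negP m_neq0] := eqVneq m 0; have [n0 | /negP n_neq0] := eqVneq n 0.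
- by move: a_neq0; rewrite m0 n0 mul0r addr0 eqxx.
- rewrite m0; nia.
- rewrite n0; nia.
- nia.
Qed.

Definition Lcomb (a : C) (u : Lvec) (b : C) (v : Lvec) : Lvec :=
  (a *: u.1.1 + b *: v.1.1, a * u.1.2 + b * v.1.2, a * u.2 + b * v.2).

Section HermitianForm.

Variable G : 'M[C]_12.

Lemma formG_combl a b u v w :
  formG G (a *: u + b *: v) w = a * formG G u w + b * formG G v w.
Proof.
rewrite /formG !mulr_sumr -big_split; apply: eq_bigr => i _.
rewrite !mulr_sumr -big_split; apply: eq_bigr => j _.
by rewrite !mxE /=; ring.
Qed.

Lemma formG_combr a b u v w :
  formG G w (a *: u + b *: v) = a^* * formG G w u + b^* * formG G w v.
Proof.
rewrite /formG !mulr_sumr -big_split; apply: eq_bigr => i _.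
rewrite !mulr_sumr -big_split; apply: eq_bigr => j _.
by rewrite !mxE /= rmorphD !rmorphM; ring.
Qed.

Lemma formG0l v : formG G 0 v = 0.
Proof. by rewrite /formG big1 // => i _; rewrite big1 // => j _; rewrite mxE !mul0r. Qed.

Lemma formL_combl a u b v w :
  formL G (Lcomb a u b v) w = a * formL G u w + b * formL G v w.
Proof. by rewrite /formL /Lcomb /= formG_combl; ring. Qed.

Lemma formL_combr a u b v w :
  formL G w (Lcomb a u b v) = a^* * formL G w u + b^* * formL G w v.
Proof.
rewrite /formL /Lcomb /=; move: theta => t.
by rewrite formG_combr !rmorphD !rmorphM; ring.
Qed.

Lemma formL_rhol u : formL G rho u = theta * (u.1.2)^*.
Proof. by rewrite /formL /rho /= formG0l !(mulr0, mul0r, add0r, mulr1). Qed.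

Lemma formL_rho_rho : formL G rho rho = 0.
Proof. by rewrite formL_rhol rmorph0 mulr0. Qed.

Hypothesis G_herm : forall i j, G j i = (G i j)^*.

Lemma conj_formG u v : (formG G u v)^* = formG G v u.
Proof.
rewrite /formG rmorph_sum exchange_big; apply: eq_bigr => j _.
rewrite rmorph_sum; apply: eq_bigr => i _.
by rewrite !rmorphM /= -G_herm conjCK; ring.
Qed.

Lemma conj_formL u v : (formL G u v)^* = formL G v u.
Proof.
rewrite /formL; move: theta => t.
by rewrite !rmorphD !rmorphM /= !conjCK conj_formG; ring.
Qed.

Hypothesis G_pos : forall u : 'rV[C]_12, u != 0 -> 0 < formG G u u.

Lemma formG_ge0 v : 0 <= formG G v v.
Proof. by have [->|/G_pos/ltW //] := eqVneq v 0; rewrite formG0l. Qed.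

Lemma mirror_norm_ge0 w s : formL G w s = 0 -> formL G s s = 3 ->
  0 <= `|formL G rho s| ^+ 2 * formL G w w + 3 * `|formL G rho w| ^+ 2.
Proof.
move=> ws0 ss3.
set v := Lcomb (formL G rho s)^* w (- (formL G rho w)^*) s.
have v_y0 : v.1.2 = 0 by rewrite /v /Lcomb /= !formL_rhol !rmorphM /= !conjCK; ring.
have sw0 : formL G s w = 0 by rewrite -conj_formL ws0 rmorph0.
have <- : formL G v v =
    `|formL G rho s| ^+ 2 * formL G w w + 3 * `|formL G rho w| ^+ 2.
  by rewrite /v formL_combl !formL_combr ws0 sw0 ss3 !normCKC rmorphN /= !conjCK; ring.
by rewrite /formL v_y0 rmorph0 !mulr0 mul0r !addr0 formG_ge0.
Qed.

Lemma ht_mirror_ge w s : inCH G w -> formL G w s = 0 -> formL G s s = 3 ->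
  `|formL G rho s| ^+ 2 / 3 <= ht G w.
Proof.
rewrite /inCH /ht => ww_lt0 ws0 ss3.
have := mirror_norm_ge0 ws0 ss3.
set W := formL G w w in ww_lt0 *; set H := `|formL G rho w| ^+ 2.
set N := `|formL G rho s| ^+ 2 => ineq.
have mW_gt0 : 0 < - W by rewrite oppr_gt0.
have -> : - H / W = H / - W by rewrite invrN mulrN mulNr.
rewrite ler_pdivlMr // mulrAC ler_pdivrMr ?ltr0n // -subr_ge0.
by have -> : H * 3 - N * - W = N * W + 3 * H by ring.
Qed.

End HermitianForm.

Lemma root_rho_norm_ge3 (G : 'M[C]_12) (s : Lvec) :
  (forall v, inLam v -> v != 0 -> 6 <= formG G v v) ->
  is_root G s -> 3 <= `|formL G rho s| ^+ 2.
Proof.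
move=> G_min [[s_Lam s_y s_z] ss3].
have s_y_neq0 : s.1.2 != 0.
  apply/eqP => s_y0; move: ss3; rewrite /formL s_y0 rmorph0 !mulr0 mul0r !addr0.
  have [->|nz] := eqVneq s.1.1 0; first by rewrite formG0l => /eqP; rewrite eq_sym pnatr_eq0.
  by move=> ss3; have := G_min _ s_Lam nz; rewrite ss3 ler_nat.
rewrite formL_rhol normrM exprMn normCK theta_mulJ norm_conjC normCK.
by rewrite -[X in X <= _]mulr1 ler_wpM2l ?ler0n ?eisenstein_normC_ge1.
Qed.

Lemma mirror_meets_horosphere (G : 'M[C]_12) (l : Lvec) :
  (forall i j, G j i = (G i j)^*) ->
  formL G l l = 3 -> `|formL G rho l| ^+ 2 = 3 ->
  exists w, on_mirror G l w /\ ht G w = 1.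
Proof.
move=> G_herm ll3; set P := formL G rho l => P3.
have PJP : P^* * P = 3 by rewrite -normCKC.
have lrho : formL G l rho = P^* by rewrite /P conj_formL.
have P3J : (P / 3)^* = P^* / 3 by rewrite rmorphM fmorphV rmorph_nat.
set w := Lcomb 1 rho (- (P / 3)) l.
have rho_w : formL G rho w = -1.
  rewrite /w formL_combr formL_rho_rho rmorph1 rmorphN /= P3J -/P.
  by rewrite mul1r add0r mulNr mulrAC PJP; field.
have l_w : formL G l w = 0.
  by rewrite /w formL_combr lrho rmorph1 rmorphN /= P3J ll3 mul1r; field.
have w_w : formL G w w = -1.
  by rewrite {1}/w formL_combl rho_w l_w mulr0 addr0 mul1r.
have w_l : formL G w l = 0 by rewrite -conj_formL // l_w rmorph0.
exists w; split; first by split; rewrite // /inCH w_w oppr_lt0 ltr01.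
by rewrite /ht rho_w w_w normrN normr1 expr1n; field.
Qed.

Theorem lemma4p1 (G : 'M[C]_12) :
  complex_Leech G ->
  (forall w : Lvec, inCH G w -> ht G w < 1 ->
     forall s : Lvec, is_root G s -> ~ on_mirror G s w)
  /\
  (forall s : Lvec, is_root G s ->
     ((exists w : Lvec, on_mirror G s w /\ ht G w = 1) <->
      (exists l : Lvec, [/\ is_root G l, `|formL G rho l| ^+ 2 = 3 &
                            forall w : Lvec, on_mirror G s w <-> on_mirror G l w]))).
Proof.
move=> [G_herm G_pos _ _ [G_min _]].
have ht_ge1 w s : is_root G s -> on_mirror G s w -> 1 <= ht G w.
  move=> s_root [w_CH ws0]; apply: le_trans (ht_mirror_ge G_herm G_pos w_CH ws0 s_root.2).
  by rewrite ler_pdivlMr ?ltr0n // mul1r root_rho_norm_ge3.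
split=> [w _ ht_lt1 s s_root /(ht_ge1 _ _ s_root)|s s_root].
  by rewrite (lt_geF ht_lt1).
split=> [[w [[w_CH ws0] ht1]] | [l [[_ ll3] l_rho3 same_mirror]]].
  exists s; split=> //; apply/le_anti.
  rewrite root_rho_norm_ge3 // andbT.
  have := ht_mirror_ge G_herm G_pos w_CH ws0 s_root.2.
  by rewrite ht1 ler_pdivrMr ?ltr0n ?mul1r.
have [w [l_w ht1]] := mirror_meets_horosphere G_herm ll3 l_rho3.
by exists w; rewrite same_mirror.
Qed.
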